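(* Let $L=L_0\oplus L_1$ be a Lie superalgebra over a field $F$ of characteristic zero and let $I=I_0\oplus I_1$ be a nilpotent ($\mathbb Z_2$-graded) ideal of $L$ of finite codimension with $I^{m+1}=0$; put $d_0=\dim(L_0/I_0)$, $d_1=\dim(L_1/I_1)$. If $\lambda=(\lambda_1,\dots,\lambda_p)\vdash k$ and $\mu=(\mu_1,\dots,\mu_q)\vdash n-k$ are partitions with $m_{\lambda,\mu}\ne 0$ in the decomposition $\chi(P_{k,n-k}(L))=\sum_{\lambda\vdash k,\mu\vdash n-k}m_{\lambda,\mu}\chi_{\lambda,\mu}$, then $\lambda_{d_0+1}+\dots+\lambda_p\le m$ and $\mu_{d_1+1}+\dots+\mu_q\le m$.
   Context: $I^{m+1}=0$ means all products of $m+1$ elements of $I$ vanish. $F\{X,Y\}$ is the free nonassociative algebra on even generators $X$ and odd generators $Y$; $Id^{gr}(L)$ is the set of polynomials vanishing under all substitutions of even variables by elements of $L_0$ and odd variables by elements of $L_1$. $P_{k,n-k}$ is the space of multilinear polynomials in $x_1,\dots,x_k\in X$, $y_1,\dots,y_{n-k}\in Y$, and $P_{k,n-k}(L)=P_{k,n-k}/(P_{k,n-k}\cap Id^{gr}(L))$, an $S_k\times S_{n-k}$-module (the groups permuting the $x$'s and $y$'s). $\chi_{\lambda,\mu}$ is the character of the irreducible $S_k\times S_{n-k}$-module $M_\lambda\otimes M_\mu$; $m_{\lambda,\mu}$ is its multiplicity. Parts $\lambda_i$ with $i>p$ are taken as absent (so the sums are empty if $p\le d_0$, resp. $q\le d_1$).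 *)

From HB Require Import structures.
From mathcomp Require Import all_boot all_order all_algebra all_fingroup.
Set Implicit Arguments. Unset Strict Implicit. Unset Printing Implicit Defensive.
Import Order.TTheory GRing.Theory.
Local Open Scope ring_scope.

(* Binary trees: nonassociative monomials / bracketings. *)
Inductive btree (A : Type) := BLeaf of A | BNode of btree A & btree A.
Arguments BLeaf {A}. Arguments BNode {A}.

Fixpoint leaves A (t : btree A) : seq A :=
  match t with BLeaf a => [:: a] | BNode t1 t2 => leaves t1 ++ leaves t2 end.

Fixpoint bmap A B (f : A -> B) (t : btree A) : btree B :=
  match t with BLeaf a => BLeaf (f a) | BNode t1 t2 => BNode (bmap f t1) (bmap f t2) end.

Fixpoint beval A (L : Type) (br : L -> L -> L) (v : A -> L) (t : btree A) : L :=
  match t with BLeaf a => v a | BNode t1 t2 => br (beval br v t1) (beval br v t2) end.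

Section LieSuper.
Variables (F : fieldType) (L : lmodType F).

Definition subsp (A : L -> Prop) : Prop :=
  A 0 /\ forall (c : F) x y, A x -> A y -> A (c *: x + y).

(* sign (-1)^{|a||b|} *)
Definition ssign (i j : bool) : F := if i && j then -1 else 1.

(* L = L_0 (+) L_1 is a Lie superalgebra with bracket br; Lp false = L_0, Lp true = L_1 *)
Record lie_super (br : L -> L -> L) (Lp : bool -> L -> Prop) : Prop := {
  ls_sub : forall b, subsp (Lp b);
  ls_sum : forall x, exists x0 x1, [/\ Lp false x0, Lp true x1 & x = x0 + x1];
  ls_direct : forall x, Lp false x -> Lp true x -> x = 0;
  ls_linl : forall (c : F) x y z, br (c *: x + y) z = c *: br x z + br y z;
  ls_linr : forall (c : F) x y z, br z (c *: x + y) = c *: br z x + br z y;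
  ls_grad : forall i j a b, Lp i a -> Lp j b -> Lp (i (+) j) (br a b);
  ls_anti : forall i j a b, Lp i a -> Lp j b -> br a b = - (ssign i j *: br b a);
  ls_jacobi : forall i j a b c, Lp i a -> Lp j b ->
      br a (br b c) = br (br a b) c + ssign i j *: br b (br a c)
}.

Definition graded_ideal (br : L -> L -> L) (Lp : bool -> L -> Prop) (I : L -> Prop) : Prop :=
  [/\ subsp I,
      forall x y, I y -> I (br x y) /\ I (br y x) &
      forall x x0 x1, I x -> Lp false x0 -> Lp true x1 -> x = x0 + x1 -> I x0 /\ I x1].

(* I^{m+1} = 0 : all products (any bracketing) of m+1 elements of I vanish *)
Definition ideal_pow_zero (br : L -> L -> L) (I : L -> Prop) (m : nat) : Prop :=
  forall (t : btree nat), size (leaves t) = m.+1 ->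
  forall v : nat -> L, (forall i, I (v i)) -> beval br v t = 0.

(* dim (A / B) = d, for subspaces B <= A *)
Definition quot_dim (A B : L -> Prop) (d : nat) : Prop :=
  exists v : 'I_d -> L,
    [/\ forall i, A (v i),
        forall x, A x -> exists c : 'I_d -> F, B (x - \sum_i c i *: v i) &
        forall c : 'I_d -> F, B (\sum_i c i *: v i) -> forall i, c i = 0].

End LieSuper.

Local Close Scope ring_scope.
Definition is_partition (lam : seq nat) (k : nat) : bool :=
  [&& sorted geq lam, all (fun x => 0 < x) lam & sumn lam == k].

(* canonical Young tableau of shape lam: cells 0..k-1 filled row by row *)
Definition row_of (lam : seq nat) (i : nat) : nat :=
  find (fun r => i < sumn (take r.+1 lam)) (iota 0 (size lam)).
Definition col_of (lam : seq nat) (i : nat) : nat :=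
  i - sumn (take (row_of lam i) lam).

Definition rowstab k (lam : seq nat) (s : {perm 'I_k}) : bool :=
  [forall i : 'I_k, row_of lam (s i) == row_of lam i].
Definition colstab k (lam : seq nat) (s : {perm 'I_k}) : bool :=
  [forall i : 'I_k, col_of lam (s i) == col_of lam i].

Definition young (F : fieldType) k (lam : seq nat) : {ffun {perm 'I_k} -> F} :=
  [ffun g => (\sum_(r : {perm 'I_k} | rowstab lam r)
              \sum_(c : {perm 'I_k} | colstab lam c && (r * c == g)%g)
                 ((-1) ^+ odd_perm c : F))%R].

Local Open Scope ring_scope.
Section Module.
Variables (F : fieldType) (L : lmodType F) (br : L -> L -> L) (Lp : bool -> L -> Prop).
Variables (k l : nat). (* l = n - k *)

Definition grp : finType := ({perm 'I_k} * {perm 'I_l})%type.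
(* composition g o h (first h, then g) *)
Definition gcomp (g h : grp) : grp := ((h.1 * g.1)%g, (h.2 * g.2)%g).
Definition ginv (g : grp) : grp := ((g.1)^-1%g, (g.2)^-1%g).

Definition gconv (a b : {ffun grp -> F}) : {ffun grp -> F} :=
  [ffun h => \sum_(g : grp) a g * b (gcomp (ginv g) h)].

(* the element e_lam e_mu, generating the irreducible module M_lam (x) M_mu *)
Definition young2 (lam mu : seq nat) : {ffun grp -> F} :=
  [ffun g => @young F k lam g.1 * @young F l mu g.2].

(* variables: inl i = x_i (even), inr j = y_j (odd) *)
Definition var : finType := ('I_k + 'I_l)%type.
Definition mono := btree var.
(* formal linear combinations of nonassociative monomials *)
Definition fpoly := seq (F * mono).

Definition multilin (t : mono) : bool := perm_eq (leaves t) (enum var).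
Definition in_P (f : fpoly) : bool := all (fun p => multilin p.2) f.

Definition relabel (g : grp) (v : var) : var :=
  match v with inl i => inl (g.1 i) | inr j => inr (g.2 j) end.

Definition gaact (a : {ffun grp -> F}) (f : fpoly) : fpoly :=
  flatten [seq [seq (a g * p.1, bmap (relabel g) p.2) | p <- f] | g <- enum grp].

Definition evalp (s0 : 'I_k -> L) (s1 : 'I_l -> L) (f : fpoly) : L :=
  \sum_(p <- f) p.1 *: beval br (fun v => match v with inl i => s0 i | inr j => s1 j end) p.2.

(* f = g modulo Id^gr(L) *)
Definition id_eq (f g : fpoly) : Prop :=
  forall (s0 : 'I_k -> L) (s1 : 'I_l -> L),
    (forall i, Lp false (s0 i)) -> (forall j, Lp true (s1 j)) -> evalp s0 s1 f = evalp s0 s1 g.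

(* m_{lam,mu} <> 0 : there is a nonzero S_k x S_l-module homomorphism from
   M_lam (x) M_mu = F[S_k x S_l] e_lam e_mu into P_{k,l}(L) = P_{k,l}/(P_{k,l} \cap Id^gr(L)).
   The homomorphism is given by a lift phi into P_{k,l}. *)
Definition mult_nonzero (lam mu : seq nat) : Prop :=
  let e := young2 lam mu in
  exists phi : {ffun grp -> F} -> fpoly,
    [/\ forall x, in_P (phi x),
        forall a b, id_eq (phi (gconv a e + gconv b e)) (phi (gconv a e) ++ phi (gconv b e)),
        forall a b, id_eq (phi (gconv b (gconv a e))) (gaact b (phi (gconv a e))) &
        exists a, ~ id_eq (phi (gconv a e)) [::]].

End Module.

(* A nonzero homomorphism M_lam (x) M_mu -> P_{k,n-k}(L) sends e_lam e_mu to a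
   multilinear polynomial E that is not a graded identity.  A transposition of
   two even variables lying in one column of lam is a column permutation, so
   modulo identities it multiplies E by -1.
   By multilinearity E would be an identity as soon as it vanished on the
   substitutions sending each even variable either to one of d0 fixed elements
   spanning L_0 modulo I_0 or into I_0.  When more than m variables go into I
   such a substitution gives 0, because the graded powers of I are ideals
   (Jacobi identity) and I^{m+1} = 0.  Otherwise at most m cells of the diagram
   of lam carry no basis label; if sumn (drop d0 lam) > m, counting column by
   column yields two cells of one column with the same label, and
   skew-symmetry forces E to vanish in characteristic 0.  The odd variables
   are handled identically with mu and d1. *)

From HB Require Import structures.
From mathcomp Require Import all_boot all_order all_algebra all_fingroup.
From mathcomp Require Import zify.

Set Implicit Arguments. Unset Strict Implicit. Unset Printing Implicit Defensive.
Import GRing.Theory.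

Lemma sumn_take_mono (s : seq nat) r r' : r <= r' -> sumn (take r s) <= sumn (take r' s).
Proof. by move=> le_rr'; rewrite -(subnKC le_rr') takeD sumn_cat leq_addr. Qed.

Lemma sumn_take_leq (s : seq nat) r : sumn (take r s) <= sumn s.
Proof. by rewrite -{2}(cat_take_drop r s) sumn_cat leq_addr. Qed.

Lemma sumn_takeS (s : seq nat) r :
  r < size s -> sumn (take r.+1 s) = sumn (take r s) + nth 0 s r.
Proof. by move=> lt_r; rewrite (take_nth 0 lt_r) -cats1 sumn_cat /= addn0. Qed.

Section YoungDiagram.
Variable lam : seq nat.

Lemma row_ofP i : i < sumn lam ->
  [/\ row_of lam i < size lam, sumn (take (row_of lam i) lam) <= i
    & i < sumn (take (row_of lam i).+1 lam)].
Proof.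
move=> lt_i; set P := fun r => i < sumn (take r.+1 lam).
have lam_gt0 : 0 < size lam by case: lam lt_i.
have hasP : has P (iota 0 (size lam)).
  apply/hasP; exists (size lam).-1; first by rewrite mem_iota /= add0n prednK // leqnn.
  by rewrite /P prednK // take_size.
have lt_row : row_of lam i < size lam.
  by rewrite /row_of -[X in _ < X](size_iota 0 (size lam)) -has_find.
have := nth_find 0 hasP; rewrite nth_iota // add0n => Prow.
split=> //; case E: (row_of lam i) => [|r]; first by rewrite take0.
have := before_find 0 (_ : r < find P (iota 0 (size lam))).
rewrite -/(row_of lam i) E ltnSn nth_iota ?add0n => [/(_ isT)/negbT|]; last first.
  by rewrite (ltn_trans _ lt_row) // E.
by rewrite /P -leqNgt.
Qed.

Lemma row_of_eq i r : r < size lam ->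
  sumn (take r lam) <= i < sumn (take r.+1 lam) -> row_of lam i = r.
Proof.
move=> lt_r /andP[ge_i lt_i].
have [lt_row le_row lt_row1] := row_ofP (leq_trans lt_i (sumn_take_leq _ _)).
case: (ltngtP (row_of lam i) r) => // [/(sumn_take_mono lam)|/(sumn_take_mono lam)] le_take.
  by move: (leq_trans le_take ge_i); rewrite leqNgt lt_row1.
by move: (leq_trans le_take le_row); rewrite leqNgt lt_i.
Qed.

Lemma row_col_of_cell r c : r < size lam -> c < nth 0 lam r ->
  row_of lam (sumn (take r lam) + c) = r /\ col_of lam (sumn (take r lam) + c) = c.
Proof.
move=> lt_r lt_c.
have row_rc : row_of lam (sumn (take r lam) + c) = r.
  by apply: row_of_eq => //; rewrite leq_addr sumn_takeS // ltn_add2l.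
by rewrite /col_of row_rc addKn.
Qed.

Lemma col_of_ltn i : i < sumn lam -> col_of lam i < nth 0 lam (row_of lam i).
Proof.
by move=> /row_ofP[lt_row le_row lt_row1]; rewrite /col_of ltn_subLR // -sumn_takeS.
Qed.

End YoungDiagram.

Lemma leq_card_fibers (T : finType) n (f : T -> nat) (P Q : pred T) :
  (forall x, f x < n) ->
  (forall c, #|[set x | (f x == c) && P x]| <= #|[set x | (f x == c) && Q x]|) ->
  #|[set x | P x]| <= #|[set x | Q x]|.
Proof.
move=> lt_f le_fibers.
have fibers (R : pred T) :
    #|[set x | R x]| = \sum_(c < n) #|[set x | (f x == c) && R x]|.
  rewrite -sum1_card (partition_big (fun x => Ordinal (lt_f x)) xpredT) //=.
  apply: eq_bigr => c _; rewrite -sum1_card; apply: eq_bigl => x.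
  by rewrite !inE andbC -(inj_eq val_inj).
by rewrite !fibers; apply: leq_sum => c _.
Qed.

Lemma card_some_leq (T : finType) d (g : T -> option 'I_d) (A : pred T) :
  (forall x y, A x -> A y -> x != y -> g x = g y -> g x = None) ->
  #|[set x | A x && (g x != None)]| <= d.
Proof.
move=> g_col; set G := [set x | A x && (g x != None)].
have g_inj : {in G &, injective g}.
  move=> x y; rewrite !inE => /andP[Ax gx] /andP[Ay _] gxy.
  by apply/eqP; apply: contraNT gx => neq_xy; rewrite (g_col x y Ax Ay neq_xy gxy).
have img_some : g @: G \subset [set~ None].
  by apply/subsetP => o /imsetP[x]; rewrite inE => /andP[_ gx] ->; rewrite !inE.
rewrite -(card_in_imset g_inj) (leq_trans (subset_leq_card img_some)) //.
by rewrite cardsC1 card_option card_ord.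
Qed.

Section Tableau.
Variables (k : nat) (lam : seq nat).
Hypothesis lam_k : is_partition lam k.

Lemma cell_ltn_sumn (i : 'I_k) : i < sumn lam.
Proof. by case/and3P: lam_k => _ _ /eqP ->. Qed.

Lemma column_rows_below d (i0 : 'I_k) : d <= row_of lam i0 ->
  d <= #|[set i : 'I_k | (col_of lam i == col_of lam i0) && (row_of lam i < d)]|.
Proof.
move=> le_d; set c0 := col_of lam i0.
case/and3P: lam_k => sorted_lam _ /eqP sum_lam.
have [lt_row0 _ _] := row_ofP (cell_ltn_sumn i0).
have cellP (r : 'I_d) :
    [/\ r < size lam, c0 < nth 0 lam r & sumn (take r lam) + c0 < k].
  have le_r : r <= row_of lam i0 by rewrite ltnW // (leq_trans (ltn_ord r)).
  have lt_r : r < size lam := leq_ltn_trans le_r lt_row0.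
  have lt_c0 : c0 < nth 0 lam r.
    apply: (leq_trans (col_of_ltn (cell_ltn_sumn i0))).
    have geq_trans : transitive geq by move=> a b c ba cb; apply: leq_trans cb ba.
    exact: (sorted_leq_nth geq_trans (fun x => leqnn x) 0 sorted_lam).
  split=> //; rewrite -sum_lam (leq_trans _ (sumn_take_leq lam r.+1)) //.
  by rewrite sumn_takeS // ltn_add2l.
have lt_cell (r : 'I_d) : sumn (take r lam) + c0 < k by case: (cellP r).
pose cell (r : 'I_d) := Ordinal (lt_cell r).
have cell_rc r : row_of lam (cell r) = r /\ col_of lam (cell r) = c0.
  by case: (cellP r) => lt_r lt_c0 _; apply: row_col_of_cell.
have cell_inj : injective cell.
  by move=> r r' /(congr1 (row_of lam \o val)) /=; rewrite !(proj1 (cell_rc _)) => /val_inj.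
rewrite -{1}[d]card_ord -(card_imset _ cell_inj).
apply/subset_leq_card/subsetP => _ /imsetP[r _ ->].
by rewrite inE; have [-> ->] := cell_rc r; rewrite eqxx ltn_ord.
Qed.

Lemma card_rows_ltn d : #|[set i : 'I_k | row_of lam i < d]| <= sumn (take d lam).
Proof.
rewrite cardE -(size_map val) -(size_iota 0 (sumn (take d lam))).
apply: uniq_leq_size; first by rewrite map_inj_uniq ?enum_uniq //; apply: val_inj.
move=> x /mapP[i]; rewrite mem_enum inE => lt_row ->.
have [_ _ lt_i] := row_ofP (cell_ltn_sumn i).
by rewrite mem_iota add0n (leq_trans lt_i) // sumn_take_mono.
Qed.

Lemma sumn_drop_leq_card_rows d :
  sumn (drop d lam) <= #|[set i : 'I_k | d <= row_of lam i]|.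
Proof.
have split_k :
    #|[set i : 'I_k | d <= row_of lam i]| + #|[set i : 'I_k | row_of lam i < d]| = k.
  rewrite -[RHS](card_ord k) -(cardsC [set i : 'I_k | row_of lam i < d]) addnC.
  by congr (_ + _); apply: eq_card => i; rewrite !inE ltnNge negbK.
have sum_k : sumn (take d lam) + sumn (drop d lam) = k.
  by rewrite -sumn_cat cat_take_drop; case/and3P: lam_k => _ _ /eqP.
move: (card_rows_ltn d) split_k sum_k; lia.
Qed.

Lemma column_pigeonhole d (g : 'I_k -> option 'I_d) (c : nat) :
  (forall i i' : 'I_k, i != i' -> col_of lam i = col_of lam i' -> g i = g i' -> g i = None) ->
  #|[set i : 'I_k | (col_of lam i == c) && (d <= row_of lam i)]| <=
  #|[set i : 'I_k | (col_of lam i == c) && (g i == None)]|.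
Proof.
move=> g_col; set A := [set i : 'I_k | col_of lam i == c].
have splitA (P : pred 'I_k) : #|[set i : 'I_k | (col_of lam i == c) && P i]| +
    #|[set i : 'I_k | (col_of lam i == c) && ~~ P i]| = #|A|.
  rewrite -(cardsID [set i | P i] A); congr (_ + _); apply: eq_card => i.
    by rewrite !inE.
  by rewrite !inE andbC.
have some_d : #|[set i : 'I_k | (col_of lam i == c) && (g i != None)]| <= d.
  apply: (card_some_leq (A := fun i : 'I_k => col_of lam i == c)).
  move=> i i' /eqP ci /eqP ci' neq_ii'.
  by apply: g_col; rewrite // ci ci'.
suff some_lo : #|[set i : 'I_k | (col_of lam i == c) && (g i != None)]| <=
               #|[set i : 'I_k | (col_of lam i == c) && ~~ (d <= row_of lam i)]|.
  move: (splitA (fun i : 'I_k => d <= row_of lam i)) (splitA (fun i => g i == None)) some_lo.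
  lia.
(* A column reaching row d has d cells in rows < d, at least as many as its
   labelled cells; a shorter column has no cell in rows >= d. *)
case: (boolP [exists i : 'I_k, (col_of lam i == c) && (d <= row_of lam i)]).
- case/existsP=> i0 /andP[/eqP ci0 le_d]; apply: (leq_trans some_d).
  rewrite (leq_trans (column_rows_below le_d)) // ci0.
  by apply/subset_leq_card/subsetP => i; rewrite !inE ltnNge.
- move=> no_high; apply/subset_leq_card/subsetP => i; rewrite !inE => /andP[ci _].
  by rewrite ci; apply: contra no_high => le_d; apply/existsP; exists i; rewrite ci.
Qed.

Lemma tableau_pigeonhole d (g : 'I_k -> option 'I_d) :
  #|[set i | g i == None]| < sumn (drop d lam) ->
  exists (i i' : 'I_k) j,
    [/\ i != i', col_of lam i = col_of lam i', g i = Some j & g i' = Some j].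
Proof.
move=> lt_none.
case: (boolP [exists i : 'I_k, exists i' : 'I_k,
                [&& i != i', col_of lam i == col_of lam i', g i == g i' & g i != None]]).
  case/existsP=> i /existsP[i' /and4P[neq_ii' /eqP col_ii' /eqP g_ii' some_i]].
  by case E: (g i) g_ii' some_i => [j|] // /esym g_i' _; exists i, i', j.
move=> no_pair.
have g_col (i i' : 'I_k) : i != i' -> col_of lam i = col_of lam i' -> g i = g i' -> g i = None.
  move=> neq_ii' /eqP col_ii' /eqP g_ii'; apply/eqP; apply: contraNT no_pair => g_some.
  by apply/existsP; exists i; apply/existsP; exists i'; rewrite neq_ii' col_ii' g_ii'.
have lt_col (i : 'I_k) : col_of lam i < k by rewrite (leq_ltn_trans (leq_subr _ _)).
have le_rows_none : #|[set i : 'I_k | d <= row_of lam i]| <= #|[set i | g i == None]|.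
  exact: leq_card_fibers lt_col (fun c => column_pigeonhole c g_col).
by move: (sumn_drop_leq_card_rows d) le_rows_none lt_none; lia.
Qed.

End Tableau.

Local Open Scope ring_scope.

Lemma beval_ext A L (br : L -> L -> L) (v v' : A -> L) t :
  v =1 v' -> beval br v t = beval br v' t.
Proof. by move=> eq_v; elim: t => [a|t1 IH1 t2 IH2] //=; rewrite IH1 IH2. Qed.

Lemma beval_bmap A B L (br : L -> L -> L) (f : A -> B) (v : B -> L) t :
  beval br v (bmap f t) = beval br (v \o f) t.
Proof. by elim: t => [a|t1 IH1 t2 IH2] //=; rewrite IH1 IH2. Qed.

Lemma leaves_bmap A B (f : A -> B) t : leaves (bmap f t) = map f (leaves t).
Proof. by elim: t => [a|t1 IH1 t2 IH2] //=; rewrite IH1 IH2 map_cat. Qed.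

Section Subspace.
Variables (F : fieldType) (L : lmodType F) (A : L -> Prop).
Hypothesis subA : subsp A.

Lemma subspD x y : A x -> A y -> A (x + y).
Proof. by case: subA => _ lin Ax Ay; have := lin 1 x y Ax Ay; rewrite scale1r. Qed.

Lemma subspZ c x : A x -> A (c *: x).
Proof. by case: subA => A0 lin Ax; have := lin c x 0 Ax A0; rewrite addr0. Qed.

Lemma subsp_lincomb n (c : 'I_n -> F) (v : 'I_n -> L) :
  (forall i, A (v i)) -> A (\sum_i c i *: v i).
Proof.
move=> Av; case: subA => A0 _; elim/big_ind: _ => //; first exact: subspD.
by move=> i _; apply: subspZ.
Qed.

End Subspace.

Section LieSuperalgebra.
Variables (F : fieldType) (L : lmodType F) (br : L -> L -> L) (Lp : bool -> L -> Prop).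
Hypothesis HL : lie_super br Lp.

Lemma brDl x y z : br (x + y) z = br x z + br y z.
Proof. by have := ls_linl HL 1 x y z; rewrite !scale1r. Qed.

Lemma brDr x y z : br z (x + y) = br z x + br z y.
Proof. by have := ls_linr HL 1 x y z; rewrite !scale1r. Qed.

Lemma br0l z : br 0 z = 0.
Proof. by apply/(addrI (br 0 z)); rewrite -brDl !addr0. Qed.

Lemma br0r z : br z 0 = 0.
Proof. by apply/(addrI (br z 0)); rewrite -brDr !addr0. Qed.

Lemma brZl c x z : br (c *: x) z = c *: br x z.
Proof. by have := ls_linl HL c x 0 z; rewrite addr0 br0l addr0. Qed.

Definition homog x := exists b, Lp b x.

Lemma beval_homog A (w : A -> L) t : (forall a, homog (w a)) -> homog (beval br w t).
Proof.
move=> w_homog; elim: t => [a|t1 [i H1] t2 [j H2]] //=.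
by exists (i (+) j); apply: (ls_grad HL).
Qed.

Section NilpotentIdeal.
Variable I : L -> Prop.
Hypothesis HI : graded_ideal br Lp I.

(* Factors are homogeneous because skew-symmetry and the Jacobi identity are
   only available for homogeneous elements. *)
Inductive iprod : nat -> L -> Prop :=
| IprodLeaf x b : I x -> Lp b x -> iprod 1 x
| IprodNode a b x y : iprod a x -> iprod b y -> iprod (a + b) (br x y).

Inductive ipow (c : nat) : L -> Prop :=
| Ipow0 : ipow c 0
| IpowD x y : iprod c x -> ipow c y -> ipow c (x + y).

Lemma iprodP c x : iprod c x -> [/\ I x, homog x & (0 < c)%N].
Proof.
elim=> [y b Iy Ly | a b y z _ [Iy [i Ly] a_gt0] _ [Iz [j Lz] _]].
  by split => //; exists b.
split; last by rewrite addn_gt0 a_gt0.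
- by case: HI => _ ideal _; case: (ideal y z Iz).
- by exists (i (+) j); apply: (ls_grad HL).
Qed.

Lemma iprodZ c x a : iprod c x -> iprod c (a *: x).
Proof.
move=> px; elim: px a => [y b Iy Ly | a' b y z _ IH pz _] a.
  case: HI => subI _ _; apply: (IprodLeaf (b := b)); first exact: subspZ.
  exact: subspZ (ls_sub HL b) _ _ Ly.
by rewrite -brZl; apply: IprodNode.
Qed.

Lemma ipowD c x y : ipow c x -> ipow c y -> ipow c (x + y).
Proof.
by elim=> [|u v pu _ IH] qy; rewrite ?add0r // -addrA; apply: IpowD => //; apply: IH.
Qed.

Lemma ipowZ c a x : ipow c x -> ipow c (a *: x).
Proof.
elim=> [|u v pu _ IH]; first by rewrite scaler0; apply: Ipow0.
by rewrite scalerDr; apply: IpowD => //; apply: iprodZ.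
Qed.

Lemma ipowN c x : ipow c x -> ipow c (- x).
Proof. by move=> qx; rewrite -scaleN1r; apply: ipowZ. Qed.

Lemma ipow_iprod c x : iprod c x -> ipow c x.
Proof. by move=> px; rewrite -[x]addr0; apply: IpowD => //; apply: Ipow0. Qed.

Lemma ipow_br_iprod a b y x : iprod a y -> ipow b x -> ipow (a + b) (br y x).
Proof.
move=> py; elim=> [|u v pu _ IH]; first by rewrite br0r; apply: Ipow0.
by rewrite brDr; apply: IpowD => //; apply: IprodNode.
Qed.

Lemma ipow_br a b x y : ipow a x -> ipow b y -> ipow (a + b) (br x y).
Proof.
move=> qx qy; elim: qx => [|u v pu _ IH]; first by rewrite br0l; apply: Ipow0.
by rewrite brDl; apply: ipowD => //; apply: ipow_br_iprod.
Qed.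

Lemma iprod_br_homog c x z : iprod c x -> homog z -> ipow c (br x z) /\ ipow c (br z x).
Proof.
move=> px; elim: px z => [y b Iy Ly | a b p q pp IHp pq IHq] z [l Lz].
  case: HI => _ ideal _; have [Izy Iyz] := ideal z y Iy.
  split; apply: ipow_iprod.
  - exact: IprodLeaf Iyz (ls_grad HL Ly Lz).
  - exact: IprodLeaf Izy (ls_grad HL Lz Ly).
have [_ [i Lp_p] _] := iprodP pp.
have [_ [j Lp_q] _] := iprodP pq.
have hz : homog z by exists l.
have q_pqz : ipow (a + b) (br (br p q) z).
  have -> : br (br p q) z = br p (br q z) - ssign F i j *: br q (br p z).
    by rewrite (ls_jacobi HL z Lp_p Lp_q) addrK.
  apply: ipowD; first by apply: ipow_br_iprod => //; apply: (proj1 (IHq z hz)).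
  by apply/ipowN/ipowZ; rewrite addnC; apply: ipow_br_iprod => //; apply: (proj1 (IHp z hz)).
split=> //; rewrite (ls_anti HL Lz (ls_grad HL Lp_p Lp_q)).
by apply/ipowN/ipowZ.
Qed.

Lemma ipow_br_homogl c z y : homog z -> ipow c y -> ipow c (br z y).
Proof.
move=> hz; elim=> [|u v pu _ IH]; first by rewrite br0r; apply: Ipow0.
by rewrite brDr; apply: ipowD => //; apply: (proj2 (iprod_br_homog pu hz)).
Qed.

Lemma ipow_br_homogr c z y : homog z -> ipow c y -> ipow c (br y z).
Proof.
move=> hz; elim=> [|u v pu _ IH]; first by rewrite br0l; apply: Ipow0.
by rewrite brDl; apply: ipowD => //; apply: (proj1 (iprod_br_homog pu hz)).
Qed.

Lemma iprodW c c' x : iprod c x -> (0 < c')%N -> (c' <= c)%N -> iprod c' x.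
Proof.
move=> px; elim: px c' => [y b Iy Ly | a b p q pp IHp pq IHq] c' c'_gt0 le_c'.
  have -> : c' = 1%N by lia.
  exact: IprodLeaf Iy Ly.
have [Ipq [l Lpq] _] := iprodP (IprodNode pp pq).
case: (ltnP 1 c') => [gt1_c'|le1_c']; last first.
  have -> : c' = 1%N by lia.
  exact: IprodLeaf Ipq Lpq.
have [_ _ a_gt0] := iprodP pp.
have [_ _ b_gt0] := iprodP pq.
have -> : c' = (minn a c'.-1 + (c' - minn a c'.-1))%N by lia.
by apply: IprodNode; [apply: IHp | apply: IHq]; lia.
Qed.

Lemma iprod_beval c x : iprod c x -> exists (t : btree nat) (v : nat -> L),
  [/\ size (leaves t) = c, forall i, I (v i) & x = beval br v t].
Proof.
elim=> [y b Iy Ly | a b p q _ [t1 [v1 [s1 I1 ->]]] _ [t2 [v2 [s2 I2 ->]]]].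
  by exists (BLeaf 0%N), (fun _ => y).
exists (BNode (bmap double t1) (bmap (fun i => i.*2.+1) t2)).
exists (fun i => if odd i then v2 i./2 else v1 i./2).
split.
- by rewrite /= size_cat !leaves_bmap !size_map s1 s2.
- by move=> i; case: (odd i).
- rewrite /= !beval_bmap; congr br; apply: beval_ext => i /=.
    by rewrite odd_double doubleK.
  by rewrite odd_double /= uphalf_double.
Qed.

Lemma ipow_eq0 m c x : ideal_pow_zero br I m -> (m < c)%N -> ipow c x -> x = 0.
Proof.
move=> nil_I lt_mc; elim=> [|u v pu _ ->] //; rewrite addr0.
have [t [v' [size_t Iv' ->]]] := iprod_beval (iprodW pu (isT : (0 < m.+1)%N) lt_mc).
exact: nil_I.
Qed.

Lemma beval_ipow A (w : A -> L) (N : pred A) t :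
  (forall a, homog (w a)) -> (forall a, N a -> I (w a)) ->
  (0 < count N (leaves t))%N -> ipow (count N (leaves t)) (beval br w t).
Proof.
move=> w_homog IN; elim: t => [a|t1 IH1 t2 IH2] /=.
  rewrite addn0; case Na: (N a) => // _; apply: ipow_iprod.
  by case: (w_homog a) => b Lb; apply: (IprodLeaf (b := b)) => //; apply: IN.
rewrite count_cat.
case: (posnP (count N (leaves t1))) => [->|c1_gt0];
  case: (posnP (count N (leaves t2))) => [->|c2_gt0] //.
- by move=> _; apply: ipow_br_homogl; [apply: beval_homog | apply: IH2].
- by rewrite addn0 => _; apply: ipow_br_homogr; [apply: beval_homog | apply: IH1].
- by move=> _; apply: ipow_br; [apply: IH1 | apply: IH2].
Qed.

Lemma beval_ideal_leaves_eq0 m A (w : A -> L) (N : pred A) t :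
  ideal_pow_zero br I m -> (forall a, homog (w a)) -> (forall a, N a -> I (w a)) ->
  (m < count N (leaves t))%N -> beval br w t = 0.
Proof.
move=> nil_I w_homog IN lt_m.
by apply: (ipow_eq0 nil_I lt_m); apply: beval_ipow => //; apply: leq_ltn_trans lt_m.
Qed.

End NilpotentIdeal.
End LieSuperalgebra.

Section Evaluation.
Variables (F : fieldType) (L : lmodType F) (br : L -> L -> L) (Lp : bool -> L -> Prop).
Hypothesis HL : lie_super br Lp.
Variables (k l : nat).

Definition evalw (w : var k l -> L) (f : fpoly F k l) : L :=
  \sum_(p <- f) p.1 *: beval br w p.2.

Definition parity (a : var k l) : bool := if a is inr _ then true else false.
Definition graded_subst (w : var k l -> L) := forall a, Lp (parity a) (w a).
Definition graded_identity f := forall w, graded_subst w -> evalw w f = 0.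

Lemma evalw_ext w w' f : w =1 w' -> evalw w f = evalw w' f.
Proof. by move=> eq_w; apply: eq_bigr => p _; rewrite (beval_ext _ _ eq_w). Qed.

Lemma id_eq_evalw f g : id_eq br Lp f g -> forall w, graded_subst w -> evalw w f = evalw w g.
Proof.
move=> fg w gw; have := fg (w \o inl) (w \o inr) (fun i => gw (inl i)) (fun j => gw (inr j)).
by rewrite /evalp -!/(evalw _ _) !(@evalw_ext _ w) //; case.
Qed.

Lemma evalw_multilin_eq0 w f : in_P f ->
  (forall t : mono k l, multilin t -> beval br w t = 0) -> evalw w f = 0.
Proof.
move=> + t_eq0; rewrite /evalw; elim: f => [|p f IH] /=; first by rewrite big_nil.
by case/andP=> Mp Pf; rewrite big_cons IH // t_eq0 // scaler0 add0r.
Qed.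

Lemma evalw_gaact w (a : {ffun grp k l -> F}) f :
  evalw w (gaact a f) = \sum_(g : grp k l) a g *: evalw (w \o relabel g) f.
Proof.
rewrite /gaact /evalw big_flatten /= big_map big_enum /=.
apply: eq_bigr => g _; rewrite big_map scaler_sumr; apply: eq_bigr => p _ /=.
by rewrite beval_bmap scalerA.
Qed.

Definition gdelta (c : F) (g0 : grp k l) : {ffun grp k l -> F} :=
  [ffun g => if g == g0 then c else 0].

Lemma evalw_gdelta w c g0 f : evalw w (gaact (gdelta c g0) f) = c *: evalw (w \o relabel g0) f.
Proof.
rewrite evalw_gaact (bigD1 g0) //= ffunE eqxx big1 ?addr0 // => g /negbTE ne_g.
by rewrite ffunE ne_g scale0r.
Qed.

Lemma gconv_gdelta c g0 X : gconv (gdelta c g0) X = [ffun h => c * X (gcomp (ginv g0) h)].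
Proof.
apply/ffunP => h; rewrite !ffunE (bigD1 g0) //= ffunE eqxx big1 ?addr0 // => g /negbTE ne_g.
by rewrite ffunE ne_g mul0r.
Qed.

Definition wset (w : var k l -> L) a x := fun a' => if a' == a then x else w a'.

Lemma beval_wset_notin w a x (t : mono k l) : a \notin leaves t ->
  beval br (wset w a x) t = beval br w t.
Proof.
elim: t => [b|t1 IH1 t2 IH2] /=; first by rewrite inE /wset eq_sym => /negbTE ->.
by rewrite mem_cat negb_or => /andP[N1 N2]; rewrite IH1 // IH2.
Qed.

Lemma beval_wset_lin w a c x y (t : mono k l) : count_mem a (leaves t) = 1%N ->
  beval br (wset w a (c *: x + y)) t =
  c *: beval br (wset w a x) t + beval br (wset w a y) t.
Proof.
elim: t => [b|t1 IH1 t2 IH2] /=.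
  by rewrite /wset; case: eqP.
rewrite count_cat; case: (posnP (count_mem a (leaves t1))) => [c1|c1_gt0] c12.
  have N1 : a \notin leaves t1 by apply/count_memPn.
  by rewrite !(beval_wset_notin _ _ N1) IH2 -?c12 ?c1 // (ls_linr HL).
have c2 : count_mem a (leaves t2) = 0%N.
  by apply/eqP; rewrite -leqn0 -(leq_add2l (count_mem a (leaves t1))) c12 addn0.
have N2 : a \notin leaves t2 by apply/count_memPn.
by rewrite !(beval_wset_notin _ _ N2) IH1 ?(ls_linl HL) // -c12 c2 addn0.
Qed.

Lemma multilin_count (t : mono k l) a : multilin t -> count_mem a (leaves t) = 1%N.
Proof. by move/seq.permP ->; rewrite count_uniq_mem ?enum_uniq // mem_enum. Qed.

Lemma evalw_wset_lin w a c x y f : in_P f ->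
  evalw (wset w a (c *: x + y)) f = c *: evalw (wset w a x) f + evalw (wset w a y) f.
Proof.
rewrite /evalw; elim: f => [|p f IH] /=; first by rewrite !big_nil scaler0 addr0.
case/andP=> Mp Pf; rewrite !big_cons IH // beval_wset_lin ?multilin_count //.
by rewrite !scalerDr !scalerA mulrC addrACA.
Qed.

Lemma subsp_evalw_wset_eq0 w a f : in_P f -> subsp (fun x => evalw (wset w a x) f = 0).
Proof.
move=> Pf; have lin c x y := evalw_wset_lin w a c x y Pf.
have g0 : evalw (wset w a 0) f = 0.
  by have := lin 1 0 0; rewrite scale1r addr0 scale1r -{1}[evalw _ f]addr0 => /addrI <-.
by split=> // c x y gx gy; rewrite lin gx gy scaler0 addr0.
Qed.

Definition block_size b := if b then l else k.

Definition bvar b : 'I_(block_size b) -> var k l :=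
  if b as b return 'I_(block_size b) -> var k l then inr else inl.

Definition bswap b : 'I_(block_size b) -> 'I_(block_size b) -> grp k l :=
  if b as b return 'I_(block_size b) -> 'I_(block_size b) -> grp k l
  then fun j j' => (1%g, tperm j j') else fun i i' => (tperm i i', 1%g).

Lemma parity_bvar b i : parity (@bvar b i) = b.
Proof. by case: b i. Qed.

Lemma bvar_inj b : injective (@bvar b).
Proof. by case: b => i i' [->]. Qed.

Lemma relabel_bswap b (i i' : 'I_(block_size b)) (w : var k l -> L) :
  w (bvar i) = w (bvar i') -> w \o relabel (bswap i i') =1 w.
Proof.
case: b i i' => i i' /= w_ii' [x|y] /=; rewrite ?perm1 //;
  by case: tpermP => [->|->|] //; rewrite w_ii'.
Qed.

End Evaluation.

Lemma colstabP k lam (s : {perm 'I_k}) :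
  reflect (forall i, col_of lam (s i) = col_of lam i) (colstab lam s).
Proof. by apply: (iffP forallP) => cs i; apply/eqP. Qed.

Lemma colstabM k lam (s t : {perm 'I_k}) :
  colstab lam s -> colstab lam t -> colstab lam (s * t)%g.
Proof. by move=> /colstabP cs /colstabP ct; apply/colstabP => i; rewrite permM ct cs. Qed.

Lemma colstabV k lam (s : {perm 'I_k}) : colstab lam s -> colstab lam s^-1%g.
Proof. by move=> /colstabP cs; apply/colstabP => i; rewrite -{2}(permKV s i) cs. Qed.

Lemma colstab_tperm k lam (i i' : 'I_k) :
  col_of lam i = col_of lam i' -> colstab lam (tperm i i').
Proof. by move=> col_ii'; apply/colstabP => x; case: tpermP => // ->. Qed.

Lemma young_mulV_colstab (F : fieldType) k lam (h tau : {perm 'I_k}) : colstab lam tau ->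
  young F k lam (h * tau^-1)%g = (-1) ^+ odd_perm tau * young F k lam h.
Proof.
move=> c_tau; rewrite !ffunE mulr_sumr; apply: eq_bigr => r _; rewrite mulr_sumr.
rewrite (reindex_inj (mulIg tau^-1)%g) /=; apply: eq_big => c.
  rewrite mulgA (inj_eq (mulIg _)); congr andb.
  apply/idP/idP => [c_c|]; last by move=> c_c; apply: colstabM => //; apply: colstabV.
  by rewrite -(mulgKV tau c); apply: colstabM.
by move=> _; rewrite odd_permM odd_permV signr_addb mulrC.
Qed.

Lemma young2_bswap (F : fieldType) k l lam mu b (i i' : 'I_(block_size k l b)) :
  i != i' -> col_of (if b then mu else lam) i = col_of (if b then mu else lam) i' ->
  gconv (gdelta (1 : F) (bswap i i')) (young2 F k l lam mu) =
  gconv (gdelta (-1) (1%g, 1%g)) (young2 F k l lam mu).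
Proof.
have young2E g : young2 F k l lam mu g = young F k lam g.1 * young F l mu g.2.
  by rewrite ffunE.
move=> neq_ii' col_ii'; rewrite !gconv_gdelta; apply/ffunP => h.
rewrite [LHS]ffunE [RHS]ffunE !young2E.
case: b i i' neq_ii' col_ii' => /= i i' neq_ii' col_ii';
  rewrite /gcomp /ginv /= !invg1 !mulg1 mul1r young_mulV_colstab ?colstab_tperm //;
  rewrite odd_tperm neq_ii' expr1.
- by rewrite mulrCA.
- by rewrite mulN1r mulNr mulN1r.
Qed.

Section PureReduction.
Variables (F : fieldType) (L : lmodType F) (br : L -> L -> L) (Lp : bool -> L -> Prop).
Hypothesis HL : lie_super br Lp.
Variables (I : L -> Prop) (k l : nat) (E : fpoly F k l).
Hypothesis PE : in_P E.
Variables (b : bool) (d : nat) (v : 'I_d -> L).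
Hypothesis v_b : forall j, Lp b (v j).
Hypothesis v_span : forall x, Lp b x -> exists c : 'I_d -> F,
  Lp b (x - \sum_j c j *: v j) /\ I (x - \sum_j c j *: v j).

Definition pure (a : var k l) (x : L) := parity a = b -> (exists j, x = v j) \/ I x.

Lemma graded_identity_from_pure :
  (forall w, graded_subst Lp w -> (forall a, pure a (w a)) -> evalw br w E = 0) ->
  graded_identity br Lp E.
Proof.
move=> pure_eq0.
suff impure_eq0 (U : seq (var k l)) w : graded_subst Lp w ->
    (forall a, a \notin U -> pure a (w a)) -> evalw br w E = 0.
  by move=> w gw; apply: (impure_eq0 (enum (var k l))) => // a; rewrite mem_enum.
elim: U w => [|a U IH] w gw pw; first by apply: pure_eq0 => // a; apply: pw.
have pw' x : Lp (parity a) x -> pure a x -> evalw br (wset w a x) E = 0.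
  move=> Lx px; apply: IH => [a'|a' a'U]; rewrite /wset; case: eqP => [->|ne_a'] //.
  by apply: pw; rewrite in_cons negb_or a'U andbT; apply/eqP.
have -> : evalw br w E = evalw br (wset w a (w a)) E.
  by apply: evalw_ext => a'; rewrite /wset; case: eqP => [->|].
case: (parity a =P b) => [ab|nab]; last by apply: pw' => // /nab.
have [c [Lu Iu]] := v_span (eq_ind _ (Lp ^~ (w a)) (gw a) _ ab).
rewrite -(subrK (\sum_j c j *: v j) (w a)); rewrite -ab in Lu.
have Z := subsp_evalw_wset_eq0 HL w a PE.
apply: (subspD Z); first by apply: pw' => // _; right.
apply: (subsp_lincomb Z) => j; apply: pw' => [|_]; first by rewrite ab.
by left; exists j.
Qed.

End PureReduction.

Lemma eq_oppr_eq0 (F : fieldType) (V : lmodType F) (x : V) :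
  [pchar F] =i pred0 -> x = - x -> x = 0.
Proof.
move=> char0 x_eqN; have two_neq0 : (2%:R : F) != 0 by have := char0 2; rewrite !inE /= => ->.
have : (2%:R : F) *: x = 0 by rewrite scaler_nat mulr2n {1}x_eqN addNr.
by move/eqP; rewrite scaler_eq0 (negbTE two_neq0) => /eqP.
Qed.

Section Vanishing.
Variables (F : fieldType) (L : lmodType F) (br : L -> L -> L) (Lp : bool -> L -> Prop).
Variable I : L -> Prop.
Hypothesis HL : lie_super br Lp.
Hypothesis HI : graded_ideal br Lp I.
Hypothesis char0 : [pchar F] =i pred0.
Variable m : nat.
Hypothesis nil_I : ideal_pow_zero br I m.

Section PureVanishing.
Variables (k l : nat) (E : fpoly F k l).
Hypothesis PE : in_P E.

Lemma evalw_alt_eq0 (w : var k l -> L) (s : grp k l) : graded_subst Lp w ->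
  id_eq br Lp (gaact (gdelta 1 s) E) (gaact (gdelta (-1) (1%g, 1%g)) E) ->
  w \o relabel s =1 w -> evalw br w E = 0.
Proof.
move=> gw alt ws; have := id_eq_evalw alt gw; rewrite !evalw_gdelta scale1r scaleN1r.
have w1 : w \o relabel (1%g, 1%g) =1 w by case=> a /=; rewrite perm1.
by rewrite (evalw_ext br E ws) (evalw_ext br E w1); apply: eq_oppr_eq0.
Qed.

Variables (b : bool) (d : nat) (v : 'I_d -> L) (lam : seq nat).
Hypothesis lam_b : is_partition lam (block_size k l b).
Hypothesis alt : forall i i' : 'I_(block_size k l b),
  i != i' -> col_of lam i = col_of lam i' ->
  id_eq br Lp (gaact (gdelta 1 (bswap i i')) E) (gaact (gdelta (-1) (1%g, 1%g)) E).

Lemma evalw_pure_eq0 w : (m < sumn (drop d lam))%N -> graded_subst Lp w ->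
  (forall a, pure I b v a (w a)) -> evalw br w E = 0.
Proof.
move=> lt_m gw pw; pose chi (i : 'I_(block_size k l b)) := [pick j | w (bvar i) == v j].
have chi_v i j : chi i = Some j -> w (bvar i) = v j.
  by rewrite /chi; case: pickP => // j' /eqP wj [<-].
pose S := [set i | chi i == None].
have I_S i : i \in S -> I (w (bvar i)).
  rewrite inE /chi; case: pickP => // no_v _.
  by case: (pw (bvar i) (parity_bvar i)) => // -[j wj]; move: (no_v j); rewrite wj eqxx.
case: (ltnP m #|S|) => [lt_mS|le_Sm].
- apply: evalw_multilin_eq0 => // t Mt.
  apply: (beval_ideal_leaves_eq0 HL HI (N := [pred a | a \in [set bvar i | i in S]]) nil_I).
  + by move=> a; exists (parity a).
  + by move=> _ /imsetP[i iS ->]; apply: I_S.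
  + have -> : count [pred a | a \in [set bvar i | i in S]] (leaves t) =
               #|[set bvar i | i in S]|.
      by rewrite (seq.permP Mt) cardE -size_filter enumT.
    by rewrite card_imset //; apply: bvar_inj.
- have [i [i' [j [neq_ii' col_ii' chi_i chi_i']]]] :=
    tableau_pigeonhole lam_b (leq_ltn_trans le_Sm lt_m).
  apply: evalw_alt_eq0 gw (alt neq_ii' col_ii') (relabel_bswap _).
  by rewrite (chi_v _ _ chi_i) (chi_v _ _ chi_i').
Qed.

End PureVanishing.

Lemma sumn_drop_shape_leq k l lam mu b d (E : fpoly F k l) :
  quot_dim (Lp b) (fun x => Lp b x /\ I x) d ->
  in_P E -> ~ graded_identity br Lp E ->
  (forall a1 a2, gconv a1 (young2 F k l lam mu) = gconv a2 (young2 F k l lam mu) ->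
     id_eq br Lp (gaact a1 E) (gaact a2 E)) ->
  is_partition (if b then mu else lam) (block_size k l b) ->
  (sumn (drop d (if b then mu else lam)) <= m)%N.
Proof.
move=> [v [v_b v_span _]] PE nzE altE shape; rewrite leqNgt; apply/negP => lt_m.
apply/nzE/(graded_identity_from_pure HL PE v_b v_span) => w gw pw.
apply: (evalw_pure_eq0 PE shape _ lt_m gw pw) => i i' neq_ii' col_ii'.
by apply: altE; apply: young2_bswap.
Qed.

End Vanishing.

Lemma mult_nonzero_lift (F : fieldType) (L : lmodType F) (br : L -> L -> L)
    (Lp : bool -> L -> Prop) k l lam mu :
  mult_nonzero br Lp k l lam mu ->
  exists E : fpoly F k l, [/\ in_P E, ~ graded_identity br Lp E &
    forall a1 a2, gconv a1 (young2 F k l lam mu) = gconv a2 (young2 F k l lam mu) ->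
      id_eq br Lp (gaact a1 E) (gaact a2 E)].
Proof.
case=> phi [P_phi _ phi_hom [a nz_a]]; set e := young2 F k l lam mu.
have e1 : gconv (gdelta 1 (1%g, 1%g)) e = e.
  rewrite gconv_gdelta; apply/ffunP => -[h1 h2].
  by rewrite ffunE /gcomp /ginv /= !invg1 !mulg1 mul1r.
have phi_act a' : id_eq br Lp (phi (gconv a' e)) (gaact a' (phi e)).
  by have := phi_hom (gdelta 1 (1%g, 1%g)) a'; rewrite e1.
exists (phi e); split=> // [E_eq0|a1 a2 a12 s0 s1 gs0 gs1].
  apply: nz_a => s0 s1 gs0 gs1; rewrite (phi_act a s0 s1 gs0 gs1) /evalp big_nil.
  rewrite -/(evalw br _ (gaact a (phi e))) evalw_gaact big1 // => g _.
  by rewrite E_eq0 ?scaler0 // => -[i|j] /=; [apply: gs0 | apply: gs1].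
by rewrite -(phi_act a1 s0 s1 gs0 gs1) -(phi_act a2 s0 s1 gs0 gs1) a12.
Qed.

Theorem lemma3 (F : fieldType) (L : lmodType F) (br : L -> L -> L)
    (Lp : bool -> L -> Prop) (I : L -> Prop) (m d0 d1 k n : nat) (lam mu : seq nat) :
  [pchar F] =i pred0 ->
  lie_super br Lp ->
  graded_ideal br Lp I ->
  ideal_pow_zero br I m ->
  quot_dim (Lp false) (fun x => Lp false x /\ I x) d0 ->
  quot_dim (Lp true) (fun x => Lp true x /\ I x) d1 ->
  (k <= n)%N ->
  is_partition lam k ->
  is_partition mu (n - k) ->
  mult_nonzero br Lp k (n - k) lam mu ->
  (sumn (drop d0 lam) <= m)%N /\ (sumn (drop d1 mu) <= m)%N.
Proof.
move=> char0 HL HI nil_I dim0 dim1 _ lam_k mu_l /mult_nonzero_lift[E [PE nzE altE]].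
split.
- exact (sumn_drop_shape_leq HL HI char0 nil_I dim0 PE nzE altE lam_k).
- exact (sumn_drop_shape_leq HL HI char0 nil_I dim1 PE nzE altE mu_l).
Qed.
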